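(* Let $\kappa\ge 1$ and $\tau\ge 0$ be integers such that $\chi(J)\le\tau$ for every digraph $J$ with $\omega(J)<\kappa$ having no disoriented long hole. Let $G$ be a digraph with $\omega(G)\le\kappa$ having no disoriented long hole. Then for every vertex $z$ of $G$ and every integer $r\ge1$, $\chi(N^r(z))\le 3\tau\,\chi(N^{r-1}(z))$. Consequently $\chi(N^r(z))\le\tau(3\tau)^{r-1}$ for all $r\ge 1$, and $\chi(N^s(z))\le(3\tau)^{s-r}\chi(N^r(z))$ for all $s\ge r\ge 1$.
   Context: Digraphs are finite, with no loops, parallel edges or antiparallel pairs; $G^*$ denotes the underlying undirected graph and $\chi,\omega$ refer to $G^*$; for $X\subseteq V(G)$, $\chi(X)=\chi(G[X])$. $N^r(z)$ is the set of vertices at distance exactly $r$ from $z$ in $G^*$. A hole of a digraph $G$ is an induced subdigraph $C$ such that $C^*$ is an induced cycle of $G^*$ of length at least four; it is long if its length is at least five. A hole $C$ is directed if every vertex has outdegree exactly one in $C$; alternating if every vertex has outdegree two or zero in $C$; and disoriented if it is neither directed nor alternating. *)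

From mathcomp Require Import all_boot.
Set Implicit Arguments. Unset Strict Implicit. Unset Printing Implicit Defensive.

Section Digraphs.
Variable T : finType.
(* [a u v] means there is an arc u -> v. *)
Variable a : rel T.

(* A digraph: no loops, no antiparallel pairs (parallel arcs are excluded
   automatically since arcs form a relation). *)
Definition digraph : Prop :=
  (forall u, ~~ a u u) /\ (forall u v, a u v -> ~~ a v u).

Definition uadj (u v : T) : bool := a u v || a v u.

Definition cliqueb (K : {set T}) : bool :=
  [forall x in K, forall y in K, (x != y) ==> uadj x y].

Definition omega : nat := \max_(K : {set T} | cliqueb K) #|K|.

Definition colorableb (X : {set T}) (k : nat) : bool :=
  [exists f : {ffun T -> 'I_#|T|.+1},
     [forall x in X, f x < k] &&
     [forall x in X, forall y in X, uadj x y ==> (f x != f y)]].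

(* chromatic number chi(X) = chi(G^*[X]) : least k such that G^*[X] is
   k-colourable (for a loopless relation #|T| colours always suffice, so the
   default #|T| is never reached spuriously). *)
Definition chi (X : {set T}) : nat :=
  \big[minn/#|T|]_(k < #|T|.+1 | colorableb X k) k.

Definition hole (n : nat) (f : 'I_n -> T) : Prop :=
  [/\ 4 <= n, injective f &
      forall i j : 'I_n,
        uadj (f i) (f j) = (j == i.+1 %% n :> nat) || (i == j.+1 %% n :> nat)].

Definition hole_outdeg (n : nat) (f : 'I_n -> T) (i : 'I_n) : nat :=
  #|[set j : 'I_n | a (f i) (f j)]|.

Definition directed_hole (n : nat) (f : 'I_n -> T) : Prop :=
  forall i, hole_outdeg f i = 1.

Definition alternating_hole (n : nat) (f : 'I_n -> T) : Prop :=
  forall i, hole_outdeg f i = 2 \/ hole_outdeg f i = 0.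

Definition disoriented_hole (n : nat) (f : 'I_n -> T) : Prop :=
  ~ directed_hole f /\ ~ alternating_hole f.

Definition no_disoriented_long_hole : Prop :=
  forall (n : nat) (f : 'I_n -> T),
    hole f -> 5 <= n -> ~ disoriented_hole f.

Fixpoint within (z : T) (k : nat) : {set T} :=
  match k with
  | 0 => [set z]
  | k'.+1 => within z k' :|: [set v | [exists u in within z k', uadj u v]]
  end.

Definition Nr (z : T) (r : nat) : {set T} :=
  match r with
  | 0 => [set z]
  | r'.+1 => within z r'.+1 :\: within z r'
  end.

End Digraphs.

(* Choose for every vertex x of N^r(z) a parent in N^(r-1)(z) and split N^r(z) by the
   colour of the parent in an optimal colouring of N^(r-1)(z) and by the orientation of
   the arc between x and its parent: this gives 2 chi(N^(r-1)(z)) classes.  Let x, y be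
   adjacent in one class, with distinct non-adjacent parents u, w.  If u is not adjacent
   to y nor w to x, a shortest path from w to u through the ball of radius r-2 closes,
   with x and y, a long hole in which x and y have out-degrees of different parity, that
   is a disoriented hole.  So one of the parents sees both x and y, and in a clique of a
   class the parent of largest rank sees the whole clique; as omega <= kappa, cliques of
   a class have fewer than kappa vertices and each class has chromatic number <= tau. *)

From mathcomp Require Import all_boot zify.
Set Implicit Arguments. Unset Strict Implicit. Unset Printing Implicit Defensive.

Lemma bigmin_leq n (P : pred 'I_n) d (i0 : 'I_n) :
  P i0 -> \big[minn/d]_(i < n | P i) (i : nat) <= i0.
Proof.
move=> Pi0; have : i0 \in index_enum 'I_n by rewrite mem_index_enum.
elim: (index_enum 'I_n) => // j r IH; rewrite in_cons big_cons.
case/predU1P=> [<-|r_i0]; first by rewrite Pi0 geq_minl.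
by case: (P j); rewrite ?geq_min IH ?orbT.
Qed.

Section Colourings.
Variables (T : finType) (a : rel T).
Hypothesis dg : digraph a.

Lemma uadjC u v : uadj a u v = uadj a v u.
Proof. by rewrite /uadj orbC. Qed.

Lemma uadj_irr u : uadj a u u = false.
Proof. by rewrite /uadj orbb; apply/negbTE; case: dg. Qed.

Lemma uadj_neq u v : uadj a u v -> u != v.
Proof. by apply: contraTneq => ->; rewrite uadj_irr. Qed.

Lemma arc_sum u v : uadj a u v -> a u v + a v u = 1.
Proof.
case: dg => _ asym; rewrite /uadj.
case huv: (a u v) => /=; last by move->.
by rewrite (negbTE (asym _ _ huv)).
Qed.

Definition proper_colouring (X : {set T}) (k : nat) (g : T -> nat) :=
  (forall x, x \in X -> g x < k) /\
  (forall x y, x \in X -> y \in X -> uadj a x y -> g x != g y).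

Lemma colorableP (X : {set T}) (k : 'I_#|T|.+1) :
  reflect (exists g, proper_colouring X k g) (colorableb a X k).
Proof.
apply: (iffP existsP) => [[f /andP [/forallP lt_k /forallP prop]] | [g [lt_k prop]]].
  exists (fun x => val (f x)); split=> [x Xx | x y Xx Yy xy].
    by have := lt_k x; rewrite Xx.
  by have := prop x; rewrite Xx /= => /forallP /(_ y); rewrite Yy xy.
have g_lt x : x \in X -> g x < #|T|.+1 by move=> /lt_k /ltn_trans; apply.
exists [ffun x => inord (g x)]; apply/andP; split.
  by apply/forallP => x; apply/implyP => Xx; rewrite ffunE inordK ?lt_k ?g_lt.
apply/forallP => x; apply/implyP => Xx; apply/forallP => y; apply/implyP => Yy.
apply/implyP => xy; rewrite !ffunE -(inj_eq val_inj) /= !inordK ?g_lt //.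
exact: prop.
Qed.

Lemma chi_colouring (X : {set T}) : exists g, proper_colouring X (chi a X) g.
Proof.
rewrite /chi; apply: (big_ind (fun k => exists g, proper_colouring X k g)).
- exists (fun x => val (enum_rank x)); split=> [x _ | x y _ _ xy]; first exact: ltn_ord.
  by apply: contraTneq xy => /val_inj /enum_rank_inj ->; rewrite uadj_irr.
- by move=> k l; case: (leqP k l).
- by move=> k /colorableP.
Qed.

Lemma chi_leq_colouring (X : {set T}) k g : proper_colouring X k g -> chi a X <= k.
Proof.
move=> col; have [kT|/ltnW Tk] := leqP k #|T|; last first.
  rewrite /chi; apply: leq_trans Tk; apply: (big_ind (fun v => v <= #|T|)) => //.
    by move=> ? ? ? ?; rewrite geq_min; apply/orP; left.
  by move=> i _; rewrite -ltnS.
have k_lt : k < #|T|.+1 by [].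
by rewrite /chi; apply: (bigmin_leq _ (i0 := Ordinal k_lt)); apply/colorableP; exists g.
Qed.

Lemma chi_gt0 (X : {set T}) x : x \in X -> 0 < chi a X.
Proof. by move=> Xx; have [g [lt_chi _]] := chi_colouring X; apply: leq_ltn_trans (lt_chi x Xx). Qed.

Lemma chi_setU (A B : {set T}) : chi a (A :|: B) <= chi a A + chi a B.
Proof.
have [gA [ltA propA]] := chi_colouring A; have [gB [ltB propB]] := chi_colouring B.
pose g x := if x \in A then gA x else chi a A + gB x.
apply: (chi_leq_colouring (g := g)); split=> [x | x y]; rewrite /g !inE.
  case: ifP => [Ax _ | _ /= Bx]; last by rewrite ltn_add2l ltB.
  by rewrite ltn_addr ?ltA.
case: ifP => Ax; case: ifP => Ay //= Xx Yy xy.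
- exact: propA.
- by rewrite neq_ltn ltn_addr ?ltA.
- by rewrite neq_ltn ltn_addr ?orbT ?ltA.
- by rewrite eqn_add2l propB.
Qed.

Lemma chi_le_classes (X : {set T}) (c : T -> nat) k t :
  (forall x, x \in X -> c x < k) ->
  (forall i, i < k -> chi a [set x in X | c x == i] <= t) ->
  chi a X <= k * t.
Proof.
elim: k X => [|k IH] X lt_k chi_cls.
  by apply: (chi_leq_colouring (g := c)); split=> [x /lt_k | ? ? /lt_k].
have -> : X = [set x in X | c x < k] :|: [set x in X | c x == k].
  by apply/setP => x; rewrite !inE -andb_orr orbC -leq_eqVlt; case: (boolP (x \in X)) => // /lt_k.
rewrite mulSnr; apply: leq_trans (chi_setU _ _) (leq_add _ (chi_cls _ _)) => //.
apply: IH => [x | i lt_ik]; first by rewrite inE => /andP [].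
suff -> : [set x in [set x in X | c x < k] | c x == i] = [set x in X | c x == i].
  exact: chi_cls (ltnW lt_ik).
by apply/setP => x; rewrite !inE -andbA; case: eqP => [->|]; rewrite ?lt_ik ?andbF.
Qed.

Lemma cliqueP (K : {set T}) :
  reflect (forall x y, x \in K -> y \in K -> x != y -> uadj a x y) (cliqueb a K).
Proof.
apply: (iffP forallP) => [cl x y Kx Ky xy | cl x].
  by have := cl x; rewrite Kx => /forallP /(_ y); rewrite Ky xy.
by apply/implyP => Kx; apply/forallP => y; apply/implyP => Ky; apply/implyP; apply: cl.
Qed.

Lemma clique_leq_omega (K : {set T}) : cliqueb a K -> #|K| <= omega a.
Proof. by move=> cl; rewrite /omega (bigD1 K) //= leq_maxl. Qed.

Lemma cliqueU1 (K : {set T}) u :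
  cliqueb a K -> (forall x, x \in K -> uadj a u x) -> cliqueb a (u |: K).
Proof.
move=> /cliqueP clK adj_u; apply/cliqueP => x y; rewrite !in_setU1.
case/predU1P=> [->|Kx]; case/predU1P=> [->|Ky]; rewrite ?eqxx // => xy.
- exact: adj_u.
- by rewrite uadjC adj_u.
- exact: clK.
Qed.

End Colourings.

Section ChordlessWalk.
Variables (T : finType) (e : rel T) (w u : T).
Hypotheses (e_sym : symmetric e) (e_irr : irreflexive e).

Definition walk n (q : seq T) :=
  [/\ size q = n, 0 < n, nth w q 0 = w, nth w q n.-1 = u &
      forall i, i.+1 < n -> e (nth w q i) (nth w q i.+1)].

Lemma walk_of_connect : connect e w u -> exists n q, walk n q.
Proof.
move=> /connectP [p e_p u_last]; exists (size p).+1, (w :: p); split=> //.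
  by rewrite u_last (nth_last w (w :: p)).
by move=> i lt_i; apply: (pathP w e_p).
Qed.

Lemma walk_cut n q s t : walk n q -> s <= t < n ->
  (if s is s'.+1 then e (nth w q s') (nth w q t) else nth w q t = w) ->
  walk (n - (t - s)) (take s q ++ drop t q).
Proof.
move=> [size_q n_gt0 q0 qn e_q] /andP [le_st lt_tn] glue.
have glue0 : s = 0 -> nth w q t = w by move=> s0; rewrite s0 in glue.
have glueS : 0 < s -> e (nth w q s.-1) (nth w q t) by case: (s) glue.
have size_take_s : size (take s q) = s by rewrite size_takel // size_q; lia.
have nth_cut k : nth w (take s q ++ drop t q) k =
    if k < s then nth w q k else nth w q (t + (k - s)).
  by rewrite nth_cat size_take_s; case: ifP => lt_ks; rewrite ?nth_take ?nth_drop.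
split=> [|||| i lt_i]; rewrite ?nth_cut.
- by rewrite size_cat size_take_s size_drop size_q; lia.
- lia.
- by have [s0|//] := posnP s; rewrite s0 addn0 glue0.
- by rewrite ifF; [rewrite -qn; congr nth; lia | lia].
case: (ltnP i.+1 s) => [lt_i1s | le_si1]; first by rewrite ifT ?e_q; lia.
have [lt_is|le_si] := ltnP i s.
  rewrite (_ : t + _ = t); last lia.
  by rewrite (_ : i = s.-1) ?glueS //; lia.
by rewrite (_ : t + (i.+1 - s) = (t + (i - s)).+1) ?e_q //; lia.
Qed.

Definition chordless (q : seq T) :=
  forall i j, i < size q -> j < size q ->
    e (nth w q i) (nth w q j) = (j == i.+1) || (i == j.+1).

(* Induction on the length: a repeated vertex or a chord lets [walk_cut] shorten the walk. *)
Lemma chordless_of_walk n q : walk n q ->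
  exists q', [/\ nth w q' 0 = w, nth w q' (size q').-1 = u, uniq q' & chordless q'].
Proof.
elim/ltn_ind: n q => n IH q walk_q; have [size_q n_gt0 q0 qn e_q] := walk_q.
pose rep := [exists i : 'I_n, exists j : 'I_n, (i < j) && (nth w q i == nth w q j)].
pose chord := [exists i : 'I_n, exists j : 'I_n, (i.+1 < j) && e (nth w q i) (nth w q j)].
have [/existsP [i /existsP [j /andP [lt_ij /eqP qij]]] | no_rep] := boolP rep.
  apply: IH (walk_cut (s := i) (t := j) walk_q _ _); [lia | by rewrite ltnW /= | ].
  case: (nat_of_ord i) lt_ij qij => [|i'] lt_ij /= <- //.
  by rewrite e_q // (ltn_trans lt_ij).
have [/existsP [i /existsP [j /andP [lt_i1j e_ij]]] | no_chord] := boolP chord.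
  by apply: IH (walk_cut (s := i.+1) (t := j) walk_q _ e_ij); [lia | rewrite ltnW /=].
have distinct i j : i < j < n -> nth w q i != nth w q j.
  move=> /andP [lt_ij lt_jn]; apply: contra no_rep => /eqP qij; apply/existsP.
  exists (Ordinal (ltn_trans lt_ij lt_jn)); apply/existsP; exists (Ordinal lt_jn).
  by rewrite lt_ij qij /=.
have no_chord' i j : i.+1 < j < n -> ~~ e (nth w q i) (nth w q j).
  move=> /andP [lt_i1j lt_jn]; apply: contra no_chord => e_ij; apply/existsP.
  exists (Ordinal (ltn_trans (ltnW lt_i1j) lt_jn)); apply/existsP; exists (Ordinal lt_jn).
  by rewrite lt_i1j.
exists q; split; rewrite ?size_q //.
  apply/(uniqP w) => i j; rewrite !inE size_q => lt_i lt_j qij.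
  case: (ltngtP i j) => [lt_ij | lt_ji | //].
    by have := distinct i j; rewrite lt_ij lt_j qij eqxx => /(_ isT).
  by have := distinct j i; rewrite lt_ji lt_i qij eqxx => /(_ isT).
move=> i j; rewrite size_q => lt_i lt_j.
case: (ltngtP i j) => [lt_ij | lt_ji | ->]; last by rewrite e_irr ltn_eqF.
  case: (eqVneq j i.+1) => [ji | ne]; first by rewrite ji e_q ?eqxx // -ji.
  by rewrite (negbTE (no_chord' i j _)) //; lia.
case: (eqVneq i j.+1) => [ij | ne]; first by rewrite ij e_sym e_q ?eqxx ?orbT // -ij.
by rewrite e_sym (negbTE (no_chord' j i _)) //; lia.
Qed.

End ChordlessWalk.

Lemma val_ordS n (i : 'I_n) : (ordS i : nat) = if i.+1 == n then 0 else i.+1.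
Proof.
rewrite /=; case: eqP => [->|ne]; first exact: modnn.
by rewrite modn_small //; have := ltn_ord i; lia.
Qed.

Lemma val_ord_pred n (i : 'I_n) : (ord_pred i : nat) = if i == 0 :> nat then n.-1 else i.-1.
Proof.
have := ltn_ord i; rewrite /=; case: eqP => [-> | /eqP i_gt0] lt_in.
  by rewrite modn_small //; lia.
by rewrite (_ : (i + n).-1 = i.-1 + n) ?modnDr ?modn_small //; lia.
Qed.

Section Holes.
Variables (T : finType) (a : rel T).
Hypothesis dg : digraph a.
Variables (n : nat) (f : 'I_n -> T).
Hypothesis hole_f : hole a f.

Lemma hole_adj_ordS i : uadj a (f i) (f (ordS i)).
Proof. by case: hole_f => _ _ ->; rewrite eqxx. Qed.

Lemma hole_outdegE i :
  hole_outdeg a f i = a (f i) (f (ordS i)) + a (f i) (f (ord_pred i)).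
Proof.
case: hole_f => n_ge4 _ adj_f.
have nbr j : a (f i) (f j) -> j = ordS i \/ j = ord_pred i.
  move=> aij; have := adj_f i j; rewrite /uadj aij => /esym /orP [] /eqP ij.
    by left; apply: val_inj.
  by right; rewrite -[j]ordSK; congr ord_pred; apply: val_inj.
have ne_nbr : ordS i != ord_pred i.
  apply/eqP => /(congr1 (@nat_of_ord n)); rewrite val_ordS val_ord_pred.
  by have := ltn_ord i; case: (i.+1 =P n); case: (i =P 0 :> nat); lia.
rewrite /hole_outdeg (cardsD1 (ordS i)) (cardsD1 (ord_pred i) (_ :\ _)) !inE eq_sym ne_nbr.
rewrite (_ : #|_| = 0) ?addn0 //; apply/eqP; rewrite cards_eq0; apply/eqP/setP => j.
by rewrite !inE; apply/and3P => [[nj1 nj2 /nbr [] /eqP]]; apply/negP.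
Qed.

(* Two consecutive vertices whose outer arcs both point towards them, or both
   away from them, have out-degrees of different parity. *)
Lemma disoriented_hole_of_pair i :
  a (f (ord_pred i)) (f i) = a (f (ordS (ordS i))) (f (ordS i)) -> disoriented_hole a f.
Proof.
move=> same_orientation.
have xy := arc_sum dg (hole_adj_ordS i).
have px := arc_sum dg (hole_adj_ordS (ord_pred i)); rewrite ord_predK in px.
have yw := arc_sum dg (hole_adj_ordS (ordS i)).
have outx := hole_outdegE i; have outy := hole_outdegE (ordS i); rewrite ordSK in outy.
set x := f i; set y := f (ordS i); set p := f (ord_pred i); set w := f (ordS (ordS i)).
have odd_sum : odd (hole_outdeg a f i + hole_outdeg a f (ordS i)).
  rewrite outx outy; move: xy px yw same_orientation.
  by case: (a x y); case: (a y x); case: (a p x); case: (a x p); case: (a w y); case: (a y w).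
split=> [directed | alternating]; first by move: odd_sum; rewrite !directed.
by move: odd_sum; case: (alternating i) => ->; case: (alternating (ordS i)) => ->.
Qed.

End Holes.

Lemma hole_cons2 (T : finType) (a : rel T) (x y : T) (q : seq T) :
  digraph a -> 2 <= size q -> uniq q -> chordless (uadj a) x q ->
  x \notin q -> y \notin q -> uadj a x y ->
  (forall k, k < size q -> uadj a x (nth x q k) = (k == (size q).-1)) ->
  (forall k, k < size q -> uadj a y (nth x q k) = (k == 0)) ->
  hole a (fun i : 'I_(size q).+2 => nth x [:: x, y & q] i).
Proof.
move=> dg size_q uniq_q chordless_q xq yq xy x_q y_q; split=> [|i j|i j]; first by [].
  have uniq_c : uniq [:: x, y & q] by rewrite /= inE negb_or (uadj_neq dg xy) xq yq.
  by move/eqP; rewrite nth_uniq // => /eqP /val_inj.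
have mod_succ k : k < (size q).+2 -> k.+1 %% (size q).+2 = if k.+1 == (size q).+2 then 0 else k.+1.
  by move=> lt_k; case: eqP => [->|ne]; rewrite ?modnn // modn_small //; lia.
rewrite !mod_succ //.
have qx k : k < size q -> uadj a (nth x q k) x = (k == (size q).-1) by rewrite uadjC; apply: x_q.
have qy k : k < size q -> uadj a (nth x q k) y = (k == 0) by rewrite uadjC; apply: y_q.
move: chordless_q (ltn_ord i) (ltn_ord j) x_q y_q qx qy size_q; rewrite /chordless.
case: (nat_of_ord i) => [|[|i']]; case: (nat_of_ord j) => [|[|j']]; case: (size q) => [|[|m]] //=.
all: move=> chordless_q lt_i lt_j x_q y_q qx qy _.
all: rewrite ?(uadj_irr dg) ?x_q ?y_q ?qx ?qy ?chordless_q //; try by rewrite uadjC.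
all: by repeat case: ifP => /eqP ?; lia.
Qed.

Section InducedPath.
Variables (T : finType) (a : rel T).
Hypothesis dg : digraph a.

Definition uadj_in (D : {set T}) : rel T := [rel s t | [&& s \in D, t \in D & uadj a s t]].

Lemma induced_path (D : {set T}) w u :
  w != u -> ~~ uadj a w u -> connect (uadj_in D) w u ->
  exists q, [/\ 3 <= size q, nth w q 0 = w, nth w q (size q).-1 = u, uniq q &
                {subset q <= D} /\ chordless (uadj a) w q].
Proof.
move=> wu not_adj_wu /(walk_of_connect) [n [q /chordless_of_walk]].
have sym : symmetric (uadj_in D) by move=> s t; rewrite /uadj_in /= uadjC andbCA.
have irr : irreflexive (uadj_in D) by move=> s; rewrite /uadj_in /= uadj_irr ?andbF.
case/(_ sym irr) => p [p0 p_last uniq_p chordless_p].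
have edge k : k.+1 < size p ->
    [&& nth w p k \in D, nth w p k.+1 \in D & uadj a (nth w p k) (nth w p k.+1)].
  by move=> lt_k; rewrite -[[&& _, _ & _]]/(uadj_in D _ _) chordless_p ?eqxx //; apply: ltnW.
have size_p : 3 <= size p.
  move: edge p0 p_last; case: p {uniq_p chordless_p} => [|v [|v' [|? ?]]] //= edge.
  - by move=> _ u_w; rewrite u_w eqxx in wu.
  - by move=> -> u_w; rewrite u_w eqxx in wu.
  by move=> v_w v'_u; move: (edge 0 isT); rewrite /= v_w v'_u (negbTE not_adj_wu) !andbF.
have p_D : {subset p <= D}.
  move=> v /(nthP w) [k lt_k <-]; case: (ltnP k.+1 (size p)) => [lt_k1 | le_k1].
    by have /and3P [] := edge k lt_k1.
  have lt_k1 : k.-1.+1 < size p by rewrite prednK //; lia.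
  by have /and3P [_] := edge k.-1 lt_k1; rewrite prednK //; lia.
exists p; split=> //; split=> // i j lt_i lt_j.
by rewrite -chordless_p // /uadj_in /= !p_D ?mem_nth.
Qed.

End InducedPath.

Section Levels.
Variables (T : finType) (a : rel T) (z : T).

Lemma within_adj k v t : v \in within a z k -> uadj a v t -> t \in within a z k.+1.
Proof. by move=> v_k vt; rewrite /= !inE; apply/orP; right; apply/existsP; exists v; rewrite v_k. Qed.

Lemma within_step k v : v \in within a z k.+1 -> v \notin within a z k ->
  exists2 t, t \in within a z k & uadj a t v.
Proof. by rewrite /= in_setU => /orP [->//|]; rewrite inE => /existsP [t /andP [? ?]] _; exists t. Qed.

Lemma within_subS k : within a z k \subset within a z k.+1.
Proof. exact: subsetUl. Qed.

Lemma NrS k x : (x \in Nr a z k.+1) = (x \in within a z k.+1) && (x \notin within a z k).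
Proof. by rewrite /Nr inE andbC. Qed.

Lemma NrS_notin k x : x \in Nr a z k.+1 -> x \notin Nr a z k.+2.
Proof. by rewrite !NrS => /andP [x_k1 _]; rewrite x_k1 andbF. Qed.

Lemma Nr_nonadj m x t : x \in Nr a z m.+2 -> t \in within a z m -> ~~ uadj a t x.
Proof. by rewrite NrS => /andP [_ x_m1] t_m; apply: contra x_m1; apply: within_adj. Qed.

Lemma connect_within (D : {set T}) m v :
  within a z m \subset D -> v \in within a z m -> connect (uadj_in a D) z v.
Proof.
elim: m v => [|m IH] v sub_D; first by rewrite inE => /eqP ->.
have [v_m _ | v_m v_m1] := boolP (v \in within a z m).
  by apply: IH => //; apply: subset_trans (within_subS m) sub_D.
have [t t_m tv] := within_step v_m1 v_m.
apply: connect_trans (IH t _ t_m) (connect1 _).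
  by apply: subset_trans (within_subS m) sub_D.
by rewrite /uadj_in /= tv !(subsetP sub_D) // (subsetP (within_subS m)).
Qed.

End Levels.

Lemma chordless_nth_default (T : finType) (e : rel T) w w' q :
  chordless e w q -> chordless e w' q.
Proof. by move=> cl_q i j lt_i lt_j; rewrite !(set_nth_default w) ?cl_q. Qed.

Section SameOrientation.
Variables (T : finType) (a : rel T) (z : T).
Hypotheses (dg : digraph a) (ndh : no_disoriented_long_hole a).

Lemma connect_via_root (D : {set T}) m u w :
  within a z m :|: [set u; w] \subset D -> u \in Nr a z m.+1 -> w \in Nr a z m.+1 ->
  connect (uadj_in a D) w u.
Proof.
move=> sub_D; rewrite !NrS => /andP [u_m1 u_m] /andP [w_m1 w_m].
have sub_m : within a z m \subset D by apply: subset_trans sub_D; apply: subsetUl.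
have [D_u D_w] : u \in D /\ w \in D by rewrite !(subsetP sub_D) // !inE eqxx ?orbT.
have sym : connect_sym (uadj_in a D).
  by apply: sym_connect_sym => s t; rewrite /uadj_in /= uadjC andbCA.
have [tu tu_m tu_u] := within_step u_m1 u_m; have [tw tw_m tw_w] := within_step w_m1 w_m.
apply: connect_trans (_ : connect _ w z) (connect_trans (connect_within sub_m tu_m) _).
  rewrite sym; apply: connect_trans (connect_within sub_m tw_m) (connect1 _).
  by rewrite /uadj_in /= tw_w D_w (subsetP sub_m).
by apply: connect1; rewrite /uadj_in /= tu_u D_u (subsetP sub_m).
Qed.


Lemma cross_adj_of_same_orientation m x y u w :
  x \in Nr a z m.+2 -> y \in Nr a z m.+2 -> u \in Nr a z m.+1 -> w \in Nr a z m.+1 ->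
  u != w -> ~~ uadj a u w -> uadj a u x -> uadj a w y -> uadj a x y ->
  a u x = a w y -> uadj a u y || uadj a w x.
Proof.
move=> x_m2 y_m2 u_m1 w_m1 uw not_adj_uw ux wy xy same_orientation.
apply: contraT; rewrite negb_or => /andP [not_uy not_wx].
pose D := within a z m :|: [set u; w].
have wu : w != u by rewrite eq_sym.
have not_adj_wu : ~~ uadj a w u by rewrite uadjC.
have [q [size_q q0 q_last uniq_q [q_D chordless_q]]] :=
  induced_path dg wu not_adj_wu (connect_via_root (subxx D) u_m1 w_m1).
have lt_last : (size q).-1 < size q by case: (size q) size_q.
have q_inner k : k < size q -> k != 0 -> k != (size q).-1 -> nth w q k \in within a z m.
  move=> lt_k k_ne0 k_ne_last.
  have ne_u : (nth w q k == u) = false by rewrite -q_last nth_uniq // (negbTE k_ne_last).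
  have ne_w : (nth w q k == w) = false.
    by rewrite -[X in _ == X]q0 nth_uniq ?(negbTE k_ne0) // (leq_trans _ lt_k).
  by have := q_D _ (mem_nth w lt_k); rewrite !inE ne_u ne_w !orbF.
have D_m1 : D \subset within a z m.+1.
  apply/subUsetP; split; first exact: within_subS.
  apply/subsetP => v; rewrite in_set2 => /orP [] /eqP ->.
    by move: u_m1; rewrite NrS => /andP [].
  by move: w_m1; rewrite NrS => /andP [].
have not_m1 v : v \in Nr a z m.+2 -> v \notin q.
  by rewrite NrS => /andP [_]; apply: contra => /q_D /(subsetP D_m1).
have x_q k : k < size q -> uadj a x (nth x q k) = (k == (size q).-1).
  move=> lt_k; rewrite (set_nth_default w) // uadjC.
  case: (eqVneq k (size q).-1) => [-> | k_ne_last]; first by rewrite q_last.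
  case: (eqVneq k 0) => [-> | k_ne0]; first by rewrite q0 (negbTE not_wx).
  exact/negbTE/(Nr_nonadj x_m2)/q_inner.
have y_q k : k < size q -> uadj a y (nth x q k) = (k == 0).
  move=> lt_k; rewrite (set_nth_default w) // uadjC.
  case: (eqVneq k 0) => [-> | k_ne0]; first by rewrite q0.
  case: (eqVneq k (size q).-1) => [-> | k_ne_last]; first by rewrite q_last (negbTE not_uy).
  exact/negbTE/(Nr_nonadj y_m2)/q_inner.
have hole_c := hole_cons2 dg (ltnW size_q) uniq_q (chordless_nth_default x chordless_q)
  (not_m1 x x_m2) (not_m1 y y_m2) xy x_q y_q.
exfalso; apply: (ndh hole_c size_q); apply: (disoriented_hole_of_pair dg hole_c (i := ord0)).
have nth_last : nth x (y :: q) (size q) = u.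
  move: lt_last q_last; case E: (size q) => [|k] //= lt_k <-.
  by apply: set_nth_default; rewrite E.
rewrite !val_ordS val_ord_pred /= ifF ?nth_last; last by case: (size q) size_q.
by rewrite /= (set_nth_default w) ?q0 // (leq_trans _ size_q).
Qed.
End SameOrientation.

Section Step.
Variables kappa tau : nat.
Hypothesis kappa_gt0 : 0 < kappa.
Hypothesis chi_small_omega : forall (J : finType) (b : rel J),
  digraph b -> omega b < kappa -> no_disoriented_long_hole b -> chi b [set: J] <= tau.
Variables (T : finType) (a : rel T) (z : T).
Hypotheses (dg : digraph a) (omega_le : omega a <= kappa) (ndh : no_disoriented_long_hole a).

Lemma chi_le_of_small_cliques (X : {set T}) :
  (forall K : {set T}, K \subset X -> cliqueb a K -> #|K| < kappa) -> chi a X <= tau.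
Proof.
move=> small; have [irr asym] := dg.
pose b : rel {x | x \in X} := fun s t => a (val s) (val t).
have dgb : digraph b by split=> [u | u v]; [apply: irr | apply: asym].
have omega_b : omega b < kappa.
  rewrite /omega; apply: (big_ind (fun v => v < kappa)).
  - by rewrite -(cards0 T); apply: small; [exact: sub0set | apply/cliqueP => ? ?; rewrite inE].
  - by move=> m n; rewrite gtn_max => ->.
  move=> K clK; rewrite -(card_imset _ val_inj); apply: small.
    by apply/subsetP => _ /imsetP [x _ ->]; exact: valP.
  apply/cliqueP => _ _ /imsetP [x Kx ->] /imsetP [y Ky ->] xy.
  by apply: (cliqueP b K clK) => //; apply: contraNneq xy => ->.
have ndh_b : no_disoriented_long_hole b.
  move=> n f [n_ge4 f_inj f_adj] n_ge5.
  by apply: (@ndh n (val \o f)) => //; split=> // i j /val_inj /f_inj.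
have [g [lt_g prop_g]] := chi_colouring dgb [set: {x | x \in X}].
apply: leq_trans (chi_small_omega dgb omega_b ndh_b).
pose g' x := if insub x is Some y then g y else 0.
have g'E x (Xx : x \in X) : g' x = g (Sub x Xx) by rewrite /g' insubT.
apply: (chi_leq_colouring (g := g')); split=> [x Xx | x y Xx Yy xy].
  by rewrite g'E lt_g ?in_setT.
by rewrite (g'E x Xx) (g'E y Yy) prop_g ?in_setT.
Qed.

Lemma chi_Nr1 : chi a (Nr a z 1) <= tau.
Proof.
apply: chi_le_of_small_cliques => K sub_K clK.
have zK : z \notin K by apply/negP => /(subsetP sub_K); rewrite NrS /= inE eqxx andbF.
have adj_z v : v \in K -> uadj a z v.
  move=> /(subsetP sub_K); rewrite NrS => /andP [v_1 v_0].
  by have [t] := within_step v_1 v_0; rewrite inE => /eqP ->.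
have := clique_leq_omega (cliqueU1 clK adj_z); rewrite cardsU1 zK.
by move/leq_trans; apply.
Qed.

Section Parent.
Variable m : nat.
Let L := Nr a z m.+1.
Let M := Nr a z m.+2.

Let nbrs x := [set t in L | uadj a t x].

Definition parent x : T :=
  if [pick t in nbrs x] is Some t0 then [arg min_(t < t0 in nbrs x) enum_rank t] else x.

Lemma parentP x : x \in M ->
  [/\ parent x \in L, uadj a (parent x) x &
      forall t, t \in L -> uadj a t x -> enum_rank (parent x) <= enum_rank t].
Proof.
move=> x_M; rewrite /parent; case: pickP => [t0 t0_nbr | no_nbr].
  case: arg_minnP => // p; rewrite inE => /andP [p_L px] p_min.
  by split=> // t t_L tx; apply: p_min; rewrite inE t_L tx.
move: x_M; rewrite /M NrS => /andP [x_m2 x_m1]; have [t t_m1 tx] := within_step x_m2 x_m1.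
have t_L : t \in L.
  rewrite /L NrS t_m1; apply: contraNN x_m1 => t_m; exact: within_adj t_m tx.
by have := no_nbr t; rewrite inE t_L tx.
Qed.

Variable g : T -> nat.
Hypothesis g_proper : proper_colouring a L (chi a L) g.

Definition parent_class x : nat := a (parent x) x + (g (parent x)).*2.

Lemma parent_class_lt x : x \in M -> parent_class x < (chi a L).*2.
Proof.
case/parentP => p_L _ _; have := g_proper.1 _ p_L.
by rewrite /parent_class -!muln2; case: (a _ x) => /=; lia.
Qed.

Lemma parent_class_inj x y : parent_class x = parent_class y ->
  a (parent x) x = a (parent y) y /\ g (parent x) = g (parent y).
Proof.
move=> cxy; split; first by have := congr1 odd cxy; rewrite !oddD !odd_double !addbF !oddb.
by have := congr1 half cxy; rewrite !half_bit_double.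
Qed.

Lemma parent_class_clique_lt (K : {set T}) i :
  K \subset [set x in M | parent_class x == i] -> cliqueb a K -> #|K| < kappa.
Proof.
move=> sub_K clK; have [-> | [v0 v0_K]] := set_0Vmem K; first by rewrite cards0.
have K_M v : v \in K -> v \in M by move/(subsetP sub_K); rewrite inE => /andP [].
have K_cls v : v \in K -> parent_class v = i by move/(subsetP sub_K); rewrite inE => /andP [_ /eqP].
case: (arg_maxnP (fun v => enum_rank (parent v)) v0_K) => xm xm_K xm_max.
have [pxm_L pxm_xm pxm_min] := parentP (K_M _ xm_K).
have pxm_adj v : v \in K -> uadj a (parent xm) v.
  move=> v_K; have [pv_L pv_v pv_min] := parentP (K_M _ v_K).
  have [same_orientation same_colour] := parent_class_inj (etrans (K_cls _ v_K) (esym (K_cls _ xm_K))).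
  have [<- // | ne] := eqVneq (parent v) (parent xm).
  have v_xm : v != xm by apply: contraNneq ne => ->.
  have not_adj : ~~ uadj a (parent v) (parent xm).
    by apply/negP => /(g_proper.2 _ _ pv_L pxm_L); rewrite same_colour eqxx.
  have := cross_adj_of_same_orientation dg ndh (K_M _ v_K) (K_M _ xm_K) pv_L pxm_L ne not_adj
    pv_v pxm_xm ((cliqueP a K clK) _ _ v_K xm_K v_xm) same_orientation.
  case/orP => // pv_xm; have le_pv := xm_max _ v_K.
  have /enum_rank_inj pv_pxm : enum_rank (parent v) = enum_rank (parent xm).
    by apply/ord_inj/eqP; rewrite eqn_leq pxm_min // andbT; apply: le_pv.
  by rewrite pv_pxm eqxx in ne.
have pxm_K : parent xm \notin K by apply/negP => /K_M; apply/negP/NrS_notin.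
have := clique_leq_omega (cliqueU1 clK pxm_adj); rewrite cardsU1 pxm_K.
by move/leq_trans; apply.
Qed.

Lemma chi_next_level : chi a M <= (chi a L).*2 * tau.
Proof.
apply: (chi_le_classes dg (c := parent_class)) => [x /parent_class_lt // | i _].
apply: chi_le_of_small_cliques => K sub_K.
exact: parent_class_clique_lt sub_K.
Qed.

End Parent.

Lemma chi_Nr_step r : 0 < r -> chi a (Nr a z r) <= 3 * tau * chi a (Nr a z r.-1).
Proof.
case: r => [// | [_ | m _]].
  apply: leq_trans chi_Nr1 _.
  by rewrite /= mulnAC leq_pmull // muln_gt0 (chi_gt0 dg (set11 z)).
have [g g_proper] := chi_colouring dg (Nr a z m.+1).
apply: leq_trans (chi_next_level g_proper) _.
by rewrite -mul2n [3 * tau * _]mulnAC leq_mul2r leq_mul2r !orbT.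
Qed.

End Step.

Lemma leq_geometric (f : nat -> nat) c :
  (forall r, 0 < r -> f r <= c * f r.-1) -> forall r s, r <= s -> f s <= c ^ (s - r) * f r.
Proof.
move=> f_step r; elim=> [|s IH]; first by rewrite leqn0 => /eqP ->; rewrite mul1n.
rewrite leq_eqVlt ltnS => /orP [/eqP -> | le_rs]; first by rewrite subnn mul1n.
apply: leq_trans (f_step s.+1 isT) _; rewrite subSn // expnS -mulnA leq_mul2l.
by rewrite IH ?orbT.
Qed.

Theorem mainTheorem5 (kappa tau : nat) :
  1 <= kappa ->
  (forall (J : finType) (b : rel J),
      digraph b -> omega b < kappa -> no_disoriented_long_hole b ->
      chi b [set: J] <= tau) ->
  forall (T : finType) (a : rel T),
    digraph a -> omega a <= kappa -> no_disoriented_long_hole a ->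
    forall z : T,
      (forall r : nat, 1 <= r ->
         chi a (Nr a z r) <= 3 * tau * chi a (Nr a z r.-1)) /\
      (forall r : nat, 1 <= r ->
         chi a (Nr a z r) <= tau * (3 * tau) ^ r.-1) /\
      (forall r s : nat, 1 <= r -> r <= s ->
         chi a (Nr a z s) <= (3 * tau) ^ (s - r) * chi a (Nr a z r)).
Proof.
move=> kappa_gt0 chi_small_omega T a dg omega_le ndh z.
have step r : 0 < r -> chi a (Nr a z r) <= 3 * tau * chi a (Nr a z r.-1).
  by move=> r_gt0; apply: (chi_Nr_step kappa_gt0 chi_small_omega z dg omega_le ndh).
have growth := leq_geometric step.
split=> //; split=> [r r_gt0 | r s _]; last exact: growth.
apply: leq_trans (growth 1 r r_gt0) _; rewrite subn1 mulnC leq_mul2r.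
by rewrite (chi_Nr1 chi_small_omega z dg omega_le ndh) orbT.
Qed.
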